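(* Let $(Y,y)$ be a special tuple whose vector $y$ has first coordinate $y_1=0$ and satisfies $y^TKy\neq 0$ (a nonaffine special tuple). If $(Y',y')$ is a special tuple equivalent to $(Y,y)$, then $y'_1=0$ and $(y')^TKy'\neq 0$, i.e. $(Y',y')$ is also nonaffine.
   Context: Let $n\ge 0$ be an integer and let $\widetilde K$ be a real symmetric $n\times n$ matrix with $\widetilde K^2=I_n$. Let $V=\mathbb R^{n+2}$ with standard basis $e_1,\dots,e_{n+2}$, and let $K=\begin{pmatrix}0&0&1\\0&\widetilde K&0\\1&0&0\end{pmatrix}$ (block sizes $1,n,1$). For $x,w\in V$ write $x^*=x^TK$ and $L_{u,w}=u\,w^*-w\,u^*$. Let $O(V,K)=\{P:P^TKP=K\}$, $\mathfrak o(V,K)=\{X:X^TK+KX=0\}$, $O(V,K)_{e_{n+2}}=\{P\in O(V,K):Pe_{n+2}=e_{n+2}\}$. A special tuple is a pair $(Y,y)$ with $Y\in\mathfrak o(V,K)$, $y\in V$; $y_1$ denotes the first coordinate of $y$. Two special tuples $(Y,y)$ and $(Y',y')$ are equivalent if there exist $P\in O(V,K)_{e_{n+2}}$, vectors $v,p\in V$ with $p^*(e_{n+2})=0$, and $v_0\in\mathbb R$ such that $Y'+L_{v,e_{n+2}}=P(Y+L_{p,y})P^{-1}$ and $y'=Py+v_0e_{n+2}$. *)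

From HB Require Import structures.
From mathcomp Require Import all_boot all_order all_algebra.
Set Implicit Arguments. Unset Strict Implicit. Unset Printing Implicit Defensive.
Import Order.TTheory GRing.Theory Num.Theory.
Local Open Scope ring_scope.

(* V = R^(n+2), vectors are column vectors 'cV_(n.+2); indices 0..n+1
   correspond to e_1..e_{n+2}. *)

Section Defs.
Variable R : realFieldType.
Variable n : nat.

(* K = [[0,0,1],[0,Kt,0],[1,0,0]] with block sizes 1, n, 1 *)
Definition Kmx (Kt : 'M[R]_n) : 'M[R]_(n.+2) :=
  \matrix_(i < n.+2, j < n.+2)
    if (i == 0%N :> nat) then (if (j == n.+1 :> nat) then 1 else 0)
    else if (i == n.+1 :> nat) then (if (j == 0%N :> nat) then 1 else 0)
    else if (j == 0%N :> nat) || (j == n.+1 :> nat) then 0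
    else match insub (i.-1)%N, insub (j.-1)%N with
         | Some i', Some j' => Kt i' j'
         | _, _ => 0
         end.

Definition elast : 'cV[R]_(n.+2) := delta_mx ord_max 0.

Definition star (K : 'M[R]_(n.+2)) (x : 'cV[R]_(n.+2)) : 'rV[R]_(n.+2) :=
  x^T *m K.

Definition Lmx (K : 'M[R]_(n.+2)) (u w : 'cV[R]_(n.+2)) : 'M[R]_(n.+2) :=
  u *m star K w - w *m star K u.

Definition in_O (K P : 'M[R]_(n.+2)) : Prop := P^T *m K *m P = K.
Definition in_o (K X : 'M[R]_(n.+2)) : Prop := X^T *m K + K *m X = 0.

Definition special_tuple (K Y : 'M[R]_(n.+2)) (y : 'cV[R]_(n.+2)) : Prop :=
  in_o K Y.

Definition equiv_tuple (K : 'M[R]_(n.+2))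
    (Y : 'M[R]_(n.+2)) (y : 'cV[R]_(n.+2))
    (Y' : 'M[R]_(n.+2)) (y' : 'cV[R]_(n.+2)) : Prop :=
  exists (P : 'M[R]_(n.+2)) (v p : 'cV[R]_(n.+2)) (v0 : R),
    [/\ in_O K P, P *m elast = elast,
        (star K p *m elast) 0 0 = 0,
        Y' + Lmx K v elast = P *m (Y + Lmx K p y) *m invmx P
      & y' = P *m y + v0 *: elast].

Definition first_coord (y : 'cV[R]_(n.+2)) : R := y 0 0.
Definition Knorm (K : 'M[R]_(n.+2)) (y : 'cV[R]_(n.+2)) : R := (y^T *m K *m y) 0 0.

End Defs.

From HB Require Import structures.
From mathcomp Require Import all_boot all_order all_algebra.
Import Order.TTheory GRing.Theory Num.Theory.
Set Implicit Arguments.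
Unset Strict Implicit.
Unset Printing Implicit Defensive.
Local Open Scope ring_scope.

(* An equivalence moves y to y' = P y + v0 e_{n+2} with P a K-isometry fixing
   e_{n+2}. Since K pairs e_{n+2} with the first coordinate, y'_1 = <e_{n+2}, y'>
   = <P e_{n+2}, P y> = y_1, and <y', y'> = <y, y> + 2 v0 y_1 because
   <e_{n+2}, e_{n+2}> = 0. Neither Y nor the hypotheses on Kt play any role. *)

Section MxForm.
Variables (R : comPzRingType) (m : nat) (K : 'M[R]_m).

Definition mxform (x z : 'cV[R]_m) : R := (x^T *m K *m z) 0 0.

Lemma mxformDl x x' z : mxform (x + x') z = mxform x z + mxform x' z.
Proof. by rewrite /mxform linearD !mulmxDl mxE. Qed.

Lemma mxformDr x z z' : mxform x (z + z') = mxform x z + mxform x z'.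
Proof. by rewrite /mxform mulmxDr mxE. Qed.

Lemma mxformZl a x z : mxform (a *: x) z = a * mxform x z.
Proof. by rewrite /mxform linearZ /= -!scalemxAl mxE. Qed.

Lemma mxformZr a x z : mxform x (a *: z) = a * mxform x z.
Proof. by rewrite /mxform -scalemxAr mxE. Qed.

Lemma mxform_isometry (P : 'M[R]_m) x z :
  P^T *m K *m P = K -> mxform (P *m x) (P *m z) = mxform x z.
Proof.
by move=> hP; rewrite /mxform trmx_mul !mulmxA -(mulmxA x^T) -(mulmxA x^T) hP.
Qed.

End MxForm.

Section Kmx.
Variables (R : realFieldType) (n : nat) (Kt : 'M[R]_n).
Local Notation K := (Kmx Kt).
Local Notation e := (elast R n).

Lemma Knorm_mxform y : Knorm K y = mxform K y y.
Proof. by []. Qed.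

Lemma mxform_elastl x : mxform K e x = first_coord x.
Proof.
have eK : e^T *m K = delta_mx 0 0 :> 'rV_(n.+2).
  rewrite /elast trmx_delta -rowE; apply/rowP => j; rewrite !mxE /=.
  by case: j => [[|j] hj] //=; rewrite ?eqxx //= ?andbT.
by rewrite /mxform eK -rowE mxE.
Qed.

Lemma mxform_elastr x : mxform K x e = first_coord x.
Proof.
have Ke : K *m e = delta_mx 0 0 :> 'cV_(n.+2).
  rewrite /elast -colE; apply/colP => i; rewrite !mxE /=.
  case: i => [[|i] hi] //=; rewrite ?eqxx //=.
  by case: (i.+1 == n.+1)%N => //=; rewrite eqxx /= ?orbT.
by rewrite /mxform -mulmxA Ke -colE !mxE.
Qed.

Lemma elast_first_coord : first_coord e = 0.
Proof. by rewrite /first_coord /elast mxE. Qed.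

Variables (P : 'M[R]_(n.+2)) (y : 'cV[R]_(n.+2)) (v0 : R).
Hypotheses (hP : in_O K P) (hPe : P *m e = e).

Lemma mxform_elastl_isometry : mxform K e (P *m y) = first_coord y.
Proof. by rewrite -hPe mxform_isometry // mxform_elastl. Qed.

Lemma mxform_elastr_isometry : mxform K (P *m y) e = first_coord y.
Proof. by rewrite -hPe mxform_isometry // mxform_elastr. Qed.

Lemma first_coord_isometry_shift : first_coord (P *m y + v0 *: e) = first_coord y.
Proof.
rewrite -[LHS]mxform_elastl mxformDr mxformZr mxform_elastl_isometry.
by rewrite mxform_elastl elast_first_coord mulr0 addr0.
Qed.

Lemma Knorm_isometry_shift :
  Knorm K (P *m y + v0 *: e) = Knorm K y + v0 *+ 2 * first_coord y.
Proof.
rewrite !Knorm_mxform !(mxformDl, mxformDr, mxformZl, mxformZr).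
rewrite mxform_isometry // mxform_elastl_isometry mxform_elastr_isometry.
rewrite mxform_elastl elast_first_coord.
by rewrite !mulr0 addr0 mulr2n mulrDl addrA.
Qed.

End Kmx.

Theorem lemma8 (R : realFieldType) (n : nat) (Kt : 'M[R]_n)
    (hKt_sym : Kt^T = Kt) (hKt_inv : Kt *m Kt = 1%:M)
    (Y Y' : 'M[R]_(n.+2)) (y y' : 'cV[R]_(n.+2)) :
  special_tuple (Kmx Kt) Y y ->
  special_tuple (Kmx Kt) Y' y' ->
  first_coord y = 0 -> Knorm (Kmx Kt) y != 0 ->
  equiv_tuple (Kmx Kt) Y y Y' y' ->
  first_coord y' = 0 /\ Knorm (Kmx Kt) y' != 0.
Proof.
move=> _ _ hy1 hyK [P [v [p [v0 [hP hPe _ _ ->]]]]].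
rewrite (first_coord_isometry_shift _ _ hP hPe) (Knorm_isometry_shift _ _ hP hPe).
by rewrite hy1 mulr0 addr0.
Qed.
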